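(* Let $d$ be a positive integer and let $A\in\mathbb{R}^{[2]\times[n]}$ be a matrix that cannot be eliminated at any column. Then there exists $b\in\mathbb{R}^{[2]}$ such that the solution graph $G(R(A,b))$ is not connected.
   Context: Fix a positive integer $d$ and let $D=\{0,1,\dots,d\}$; $[n]=\{1,\dots,n\}$. For $A\in\mathbb{R}^{[m]\times[n]}$ and $b\in\mathbb{R}^{[m]}$, $R(A,b)=\{x\in D^{[n]} : Ax\ge b\}$. For $R\subseteq D^{[n]}$, the solution graph $G(R)$ is the undirected graph with vertex set $R$ in which $x,y$ are adjacent iff they differ in exactly one coordinate. A matrix $A=(a_{ij})\in\mathbb{R}^{[m]\times[n]}$ can be eliminated at column $j\in[n]$ if (i) for every row $i$ with $a_{ij}>0$ we have $a_{ij'}=0$ for all $j'\in[n]\setminus\{j\}$, or (ii) for every row $i$ with $a_{ij}<0$ we have $a_{ij'}=0$ for all $j'\in[n]\setminus\{j\}$. *)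

From mathcomp Require Import all_boot all_order all_algebra.
From mathcomp Require Import reals.
Set Implicit Arguments. Unset Strict Implicit. Unset Printing Implicit Defensive.
Import Order.TTheory GRing.Theory Num.Theory.
Local Open Scope ring_scope.

(* D = {0,...,d} is represented by 'I_d.+1 ; points of D^[n] are finite
   functions 'I_n -> 'I_d.+1 (coordinates j : 'I_n stand for j+1 in [n]). *)
Definition point (d n : nat) := {ffun 'I_n -> 'I_d.+1}.

Definition solset (R : realType) (d m n : nat) (A : 'M[R]_(m, n)) (b : 'cV[R]_m)
  : {set point d n} :=
  [set x : point d n | [forall i : 'I_m,
      b i 0 <= \sum_(j < n) A i j * (nat_of_ord (x j))%:R]].

Definition adj1 (d n : nat) (x y : point d n) : bool :=
  #|[set j : 'I_n | x j != y j]| == 1%N.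

Definition solgraph_rel (d n : nat) (S : {set point d n}) : rel (point d n) :=
  fun x y => [&& x \in S, y \in S & adj1 x y].

Definition graph_connected (d n : nat) (S : {set point d n}) : Prop :=
  forall x y, x \in S -> y \in S -> connect (solgraph_rel S) x y.

Definition elim_at (R : realType) (m n : nat) (A : 'M[R]_(m, n)) (j : 'I_n) : Prop :=
  (forall i : 'I_m, 0 < A i j -> forall j' : 'I_n, j' != j -> A i j' = 0) \/
  (forall i : 'I_m, A i j < 0 -> forall j' : 'I_n, j' != j -> A i j' = 0).

From Pilot Require Import Defs.
From mathcomp Require Import all_boot all_order all_algebra.
From mathcomp Require Import reals.
From mathcomp Require Import lra.
Set Implicit Arguments. Unset Strict Implicit.
Import Order.TTheory GRing.Theory Num.Theory.
Local Open Scope ring_scope.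

(* Every column of A has a positive and a negative entry, since A cannot be
   eliminated at it.  If A x <= A y for some x <> y, take b = A x: moving x in
   one coordinate decreases some row, so x is an isolated vertex of G(R(A,b)),
   which also contains y.  Otherwise x |-> A x is injective and the second row
   decreases as the first increases.  Then for x, y consecutive in the order
   of the first row, b = ((A x)_1, (A y)_2) gives R(A,b) = {x, y}; so it
   suffices to find consecutive non-adjacent x, y.  Starting from any
   non-adjacent pair, an intermediate point w either is non-adjacent to an
   end, or is adjacent to both; then its mirror image w' (swap the two
   coordinates where x and y differ) satisfies A w + A w' = A x + A y, so w, w'
   is a non-adjacent pair strictly inside, and the interval shrinks. *)

Lemma ord2P (i : 'I_2) : i = 0 \/ i = 1.
Proof. by case: i => [[|[|//]] ?]; [left | right]; apply: val_inj. Qed.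

Section Points.
Variables (d n : nat).
Implicit Types (x y z w : point d n) (S : {set point d n}).

Definition diffset x y : {set 'I_n} := [set j | x j != y j].

Lemma diffsetC x y : diffset x y = diffset y x.
Proof. by apply/setP => j; rewrite !inE eq_sym. Qed.

Lemma diffset_eq0 x y : (diffset x y == set0) = (x == y).
Proof.
apply/eqP/eqP => [xy | ->]; last by apply/setP => j; rewrite !inE eqxx.
apply/ffunP => j; apply/eqP; apply: contraT => xyj.
by have := in_set0 j; rewrite -xy inE xyj.
Qed.

Lemma adj1E x y : Defs.adj1 x y = (#|diffset x y| == 1)%N.
Proof. by []. Qed.

Lemma adj1C x y : Defs.adj1 x y = Defs.adj1 y x.
Proof. by rewrite !adj1E diffsetC. Qed.

Lemma adj1P x y : Defs.adj1 x y ->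
  exists j, x j != y j /\ forall l, l != j -> x l = y l.
Proof.
rewrite adj1E => /cards1P [j xyj]; exists j; split.
  by have := set11 j; rewrite -xyj inE.
move=> l lj; apply/eqP; apply: contraNT lj => xyl.
have : l \in diffset x y by rewrite inE.
by rewrite xyj inE.
Qed.

Lemma adj1_neq x y : Defs.adj1 x y -> x != y.
Proof. by move=> /adj1P [j [xyj _]]; apply: contraNneq xyj => ->. Qed.

Lemma adj1_common_neighbor x y z : x != y -> ~~ Defs.adj1 x y ->
  Defs.adj1 x z -> Defs.adj1 z y -> forall l, z l = x l \/ z l = y l.
Proof.
move=> xy nadj /adj1P [j [_ xzj]] /adj1P [k [_ zyk]] l.
case: (eqVneq (z l) (x l)) => [|zxl]; first by left.
right; apply/eqP; apply: contraT => zyl; exfalso.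
have lj : l = j by apply/eqP; apply: contraNT zxl => /xzj ->.
have lk : l = k by apply/eqP; apply: contraNT zyl => /zyk ->.
have : diffset x y \subset [set j].
  apply/subsetP => l'; rewrite !inE; apply: contraR => l'j.
  by rewrite xzj // zyk // -lk lj.
move/subset_leq_card; rewrite cards1 leq_eqVlt -adj1E (negbTE nadj) ltnS.
by rewrite leqn0 cards_eq0 diffset_eq0 (negbTE xy).
Qed.

Definition mirror x y z : point d n :=
  [ffun l => if z l == x l then y l else x l].

Lemma diffset_mirror x y z : (forall l, z l = x l \/ z l = y l) ->
  diffset z (mirror x y z) = diffset x y.
Proof.
move=> xyz; apply/setP => l; rewrite !inE ffunE.
case: (xyz l) => ->; rewrite ?eqxx //.
by case: (eqVneq (y l) (x l)) => [->|yx]; rewrite ?eqxx // eq_sym.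
Qed.

Lemma isolated_not_connected S x y : x \in S -> y \in S -> x != y ->
  (forall w, w \in S -> ~~ Defs.adj1 x w) -> ~ graph_connected S.
Proof.
move=> xS yS xy isol /(_ x y xS yS) /connectP [[|w p] /=].
  by move=> _ exy; rewrite exy eqxx in xy.
by case/andP => /and3P [_ wS xw] _ _; move: (isol w wS); rewrite xw.
Qed.

Lemma exists_nonadjacent_pair (j k : 'I_n) : (0 < d)%N -> j != k ->
  exists x y : point d n, x != y /\ ~~ Defs.adj1 x y.
Proof.
move=> d_gt0 jk; pose x : point d n := [ffun=> ord0].
pose y : point d n := [ffun l => if l \in [set j; k] then ord_max else ord0].
have xy : diffset x y = [set j; k].
  apply/setP => l; rewrite [in LHS]inE !ffunE.
  by case: (l \in _); rewrite ?eqxx // -val_eqE /= eq_sym -lt0n.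
exists x, y; rewrite -diffset_eq0 adj1E xy cards2 jk; split => //.
by apply/set0Pn; exists j; rewrite !inE eqxx.
Qed.

End Points.

Section Rows.
Variables (R : realType) (d m n : nat) (A : 'M[R]_(m, n)).
Implicit Types (x y z w : point d n).

Definition lhs (i : 'I_m) x : R := \sum_(j < n) A i j * (x j)%:R.

Lemma in_solset b x : (x \in solset d A b) = [forall i, b i 0 <= lhs i x].
Proof. by rewrite inE. Qed.

Lemma lhs_step i x y j : (forall l, l != j -> x l = y l) ->
  lhs i y - lhs i x = A i j * ((y j)%:R - (x j)%:R).
Proof.
move=> xy; rewrite /lhs (bigD1 j) //= [X in _ - X](bigD1 j) //=.
rewrite (eq_bigr (fun l => A i l * (x l)%:R)) => [|l /xy ->] //.
by rewrite mulrBr; lra.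
Qed.

Lemma lhs_mirror i x y z : (forall l, z l = x l \/ z l = y l) ->
  lhs i z + lhs i (mirror x y z) = lhs i x + lhs i y.
Proof.
move=> xyz; rewrite /lhs -!big_split; apply: eq_bigr => l _ /=.
rewrite -!mulrDr ffunE; congr (_ * _).
case: (xyz l) => ->; rewrite ?eqxx //.
by case: (eqVneq (y l) (x l)) => [->|_]; rewrite // addrC.
Qed.

Lemma not_elim_at_signs j : ~ elim_at A j ->
  (exists i, 0 < A i j) /\ (exists i, A i j < 0).
Proof.
move=> nelim; split; apply/existsP; apply: contraT => /existsPn none;
  exfalso; apply: nelim.
  by left => i; rewrite (negbTE (none i)).
by right => i; rewrite (negbTE (none i)).
Qed.

Lemma not_elim_at_other_column j : ~ elim_at A j -> exists k, k != j.
Proof.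
move=> nelim; apply/existsP; apply: contraT => /existsPn none.
by exfalso; apply: nelim; left => i _ k; rewrite (negbTE (none k)).
Qed.

Section MixedSigns.
Hypothesis signs : forall j, (exists i, 0 < A i j) /\ (exists i, A i j < 0).

Lemma adj1_lhs_lt x w : Defs.adj1 x w -> exists i, lhs i w < lhs i x.
Proof.
move=> /adj1P [j [xwj xw]]; have step i := lhs_step i xw.
have [[ip Aip] [ineg Aineg]] := signs j.
case: (ltngtP (x j) (w j)) => [xw_lt|wx_lt|/val_inj exj].
- by exists ineg; rewrite -subr_lt0 step nmulr_rlt0 // subr_gt0 ltr_nat.
- by exists ip; rewrite -subr_lt0 step pmulr_rlt0 // subr_lt0 ltr_nat.
- by rewrite exj eqxx in xwj.
Qed.

Lemma dominated_not_connected x y : x != y ->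
  (forall i, lhs i x <= lhs i y) ->
  ~ graph_connected (solset d A (\col_i lhs i x)).
Proof.
move=> xy le; apply: (isolated_not_connected (x := x) (y := y)) => //.
- by rewrite in_solset; apply/forallP => i; rewrite mxE.
- by rewrite in_solset; apply/forallP => i; rewrite mxE.
move=> w; rewrite in_solset => /forallP wS; apply/negP => /adj1_lhs_lt [i].
by have := wS i; rewrite mxE ltNge => ->.
Qed.

End MixedSigns.
End Rows.

Section Antichain.
Variables (R : realType) (d n : nat) (A : 'M[R]_(2, n)).
Hypothesis antichain :
  forall x y : point d n, (forall i, lhs A i x <= lhs A i y) -> x = y.
Implicit Types (x y z w : point d n).
Local Notation f := (lhs (d := d) A 0).
Local Notation g := (lhs (d := d) A 1).

Lemma lhs0_inj : injective f.
Proof.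
move=> x y fxy; case: (lerP (g x) (g y)) => gxy.
  by apply: antichain => i; case: (ord2P i) => ->; rewrite ?fxy.
by apply/esym/antichain => i; case: (ord2P i) => ->; [rewrite fxy|exact: ltW].
Qed.

Lemma lhs1_anti x y : f x < f y -> g y < g x.
Proof.
move=> fxy; rewrite ltNge; apply/negP => gxy.
suff exy : x = y by rewrite exy ltxx in fxy.
by apply: antichain => i; case: (ord2P i) => ->; [exact: ltW | exact: gxy].
Qed.

Definition nonadj_lt x y := (f x < f y) && ~~ Defs.adj1 x y.

Definition between x y := [set w | f x < f w < f y].

Lemma nonadj_lt_total x y : x != y -> ~~ Defs.adj1 x y ->
  nonadj_lt x y \/ nonadj_lt y x.
Proof.
move=> xy nadj; rewrite /nonadj_lt [Defs.adj1 y x]adj1C nadj !andbT.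
case: (ltgtP (f x) (f y)) => [fxy|fyx|/lhs0_inj exy]; [by left|by right|].
by rewrite exy eqxx in xy.
Qed.

Lemma between_proper x y x' y' w : f x <= f x' -> f y' <= f y ->
  w \in between x y -> w \notin between x' y' ->
  between x' y' \proper between x y.
Proof.
move=> xx' y'y wxy wx'y'; apply/properP; split; last by exists w.
apply/subsetP => v; rewrite !inE => /andP [x'v vy'].
by rewrite (le_lt_trans xx' x'v) (lt_le_trans vy' y'y).
Qed.

Lemma nonadj_lt_shrink x y w : nonadj_lt x y -> w \in between x y ->
  exists x' y', nonadj_lt x' y' /\ between x' y' \proper between x y.
Proof.
move=> /andP [fxy nadj] wxy; have /[!inE] /andP [fxw fwy] := wxy.
have xy : x != y by apply: contraTneq fxy => ->; rewrite ltxx.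
have w_left u : w \notin between w u by rewrite inE ltxx.
have w_right u : w \notin between u w by rewrite inE ltxx andbF.
have [xw | nxw] := boolP (Defs.adj1 x w); last first.
  exists x, w; split; first by rewrite /nonadj_lt fxw.
  exact: between_proper (lexx _) (ltW fwy) wxy (w_right x).
have [wy | nwy] := boolP (Defs.adj1 w y); last first.
  exists w, y; split; first by rewrite /nonadj_lt fwy.
  exact: between_proper (ltW fxw) (lexx _) wxy (w_left y).
have xyw := adj1_common_neighbor xy nadj xw wy.
set w' := mirror x y w.
(* f w' = f x + f y - f w, so w' too lies strictly between x and y. *)
have fw' : f w + f w' = f x + f y := lhs_mirror A 0 xyw.
have nadj' : ~~ Defs.adj1 w w' by rewrite adj1E diffset_mirror.
have ww' : w != w' by rewrite -diffset_eq0 diffset_mirror // diffset_eq0.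
have [lt | lt] := nonadj_lt_total ww' nadj'; [exists w, w' | exists w', w];
  split => //; apply: (between_proper _ _ wxy); rewrite ?w_left ?w_right //.
all: lra.
Qed.

Lemma exists_nonadj_gap x y : nonadj_lt x y ->
  exists x' y', nonadj_lt x' y' /\ between x' y' = set0.
Proof.
have [k] := ubnP #|between x y|; elim: k x y => // k IH x y.
rewrite ltnS => le xy; have [gap | [w wxy]] := set_0Vmem (between x y).
  by exists x, y.
have [x' [y' [xy' lt]]] := nonadj_lt_shrink xy wxy.
exact: IH (leq_trans (proper_card lt) le) xy'.
Qed.

Lemma gap_not_connected x y : nonadj_lt x y -> between x y = set0 ->
  ~ graph_connected (solset d A (\col_i (if i == 0 then f x else g y))).
Proof.
move=> /andP [fxy nadj] gap.
set S := solset _ _ _.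
have inS w : (w \in S) = (f x <= f w) && (g y <= g w).
  rewrite in_solset; apply/forallP/andP => [h | [fw gw] i].
    by split; [move: (h 0) | move: (h 1)]; rewrite mxE.
  by rewrite mxE; case: (ord2P i) => ->.
have S_xy w : w \in S -> w = x \/ w = y.
  rewrite inS => /andP [fxw gyw].
  have fwy : f w <= f y.
    by rewrite leNgt; apply/negP => /lhs1_anti; rewrite ltNge gyw.
  case: (eqVneq (f w) (f x)) => [/lhs0_inj|wx]; first by left.
  case: (eqVneq (f w) (f y)) => [/lhs0_inj|wy]; first by right.
  have : w \in between x y by rewrite inE !lt_neqAle fxw fwy eq_sym wx wy.
  by rewrite gap inE.
apply: (isolated_not_connected (x := x) (y := y)).
- by rewrite inS lexx ltW ?lhs1_anti.
- by rewrite inS lexx ltW.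
- by apply: contraTneq fxy => ->; rewrite ltxx.
by move=> w /S_xy [->|->] //; apply/negP => /adj1_neq; rewrite eqxx.
Qed.

End Antichain.

Theorem lemma3 (R : realType) (d n : nat) (hd : (0 < d)%N) (hn : (0 < n)%N)
    (A : 'M[R]_(2, n)) (hA : forall j : 'I_n, ~ elim_at A j) :
  exists b : 'cV[R]_2, ~ graph_connected (solset d A b).
Proof.
have signs j := not_elim_at_signs (hA j).
have [k kj] := not_elim_at_other_column (hA (Ordinal hn)).
have [/existsP [x /existsP [y /andP [xy /forallP le]]] | /existsPn undom] :=
  boolP [exists x : point d n, exists y : point d n,
           (x != y) && [forall i, lhs A i x <= lhs A i y]].
  by exists (\col_i lhs A i x); exact: (dominated_not_connected signs xy le).
have antichain (x y : point d n) : (forall i, lhs A i x <= lhs A i y) -> x = y.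
  move=> le; apply/eqP; apply: contraT => xy.
  have /existsPn/(_ y) := undom x.
  by rewrite xy /= => /forallPn [i]; rewrite le.
have [x0 [y0 [xy0 nadj0]]] := exists_nonadjacent_pair hd kj.
have [x [y [xy gap]]] :
    exists x y : point d n, nonadj_lt A x y /\ between A x y = set0.
  have [lt0 | lt0] := nonadj_lt_total antichain xy0 nadj0;
    exact: (exists_nonadj_gap antichain lt0).
exists (\col_i (if i == 0 then lhs A 0 x else lhs A 1 y)).
exact: (gap_not_connected antichain xy gap).
Qed.
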